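(* Let $n$ and $s$ be sufficiently large and $0<p,\varepsilon<1$. Suppose $G$ is an $n$-vertex $(\varepsilon,s)$-expander and $\varepsilon ps\ge10^5(\log n)^3$. Let $H$ be the random spanning subgraph of $G$ (with $V(H)=V(G)$) containing each edge of $G$ independently with probability $p$, and let $s'=\frac{\varepsilon ps}{10^4(\log n)^2}$. Then the probability that $H$ is not an $(\frac{\varepsilon}{4},s')$-expander is less than $2/n$.
   Context: Logarithms are base 2. For $U\subseteq V(G)$, $N_G(U)$ is the set of vertices outside $U$ with a neighbour in $U$; $G-F$ is $G$ with edge set $F$ deleted. An $n$-vertex graph $G$ is an $(\varepsilon,s)$-expander if for every $U\subseteq V(G)$, $F\subseteq E(G)$ with $1\le|U|\le\frac23n$ and $|F|\le s|U|$ we have $|N_{G-F}(U)|\ge\varepsilon|U|/(\log n)^2$. *)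

From HB Require Import structures.
From mathcomp Require Import all_boot all_order all_algebra.
From mathcomp Require Import boolp reals exp Rstruct.
Set Implicit Arguments. Unset Strict Implicit. Unset Printing Implicit Defensive.
Import Order.TTheory GRing.Theory Num.Theory.
Local Open Scope ring_scope.

Notation RealT := Rdefinitions.R.

Definition log2 (x : RealT) : RealT := ln x / ln 2.

(* A (simple) graph on vertex set 'I_n is given by its edge set:
   a set of 2-element subsets of 'I_n. *)
Definition simple_edges (n : nat) (E : {set {set 'I_n}}) : Prop :=
  forall e, e \in E -> #|e| = 2%N.

Definition nbhd (n : nat) (E : {set {set 'I_n}}) (U : {set 'I_n}) : {set 'I_n} :=
  [set v | (v \notin U) && [exists u in U, [set u; v] \in E]].

Definition expander (n : nat) (E : {set {set 'I_n}}) (eps s : RealT) : Prop :=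
  forall (U : {set 'I_n}) (F : {set {set 'I_n}}),
    F \subset E ->
    (1 <= #|U|)%N ->
    (#|U|%:R <= 2 / 3 * n%:R :> RealT) ->
    (#|F|%:R <= s * #|U|%:R :> RealT) ->
    eps * #|U|%:R / (log2 n%:R) ^+ 2 <= #|nbhd (E :\: F) U|%:R.

(* Probability that the random spanning subgraph H of G = ('I_n, E), keeping
   each edge independently with probability p, has edge set in the event A. *)
Definition rand_subgraph_prob (n : nat) (E : {set {set 'I_n}}) (p : RealT)
    (A : {set {set 'I_n}} -> Prop) : RealT :=
  \sum_(F : {set {set 'I_n}} | F \subset E)
     (if `[< A F >] then p ^+ #|F| * (1 - p) ^+ (#|E| - #|F|) else 0).

(* If the random subgraph H fails to be an (eps/4, s')-expander, there are U and
   F' within E(H) with |F'| <= s'|U| for which W := N_{H-F'}(U) is small.  As G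
   expands, the set S of G-edges from U to V minus (U and W) has more than s|U|
   edges, of which H keeps at most |F'|.  For a fixed pair (U, W) this event is
   bounded by the exponential moment e^{s'|U|} E[e^{-|E(H) & S|}], which is at most
   e^{s'|U| - p|S|/2} <= e^{-ps|U|/4}.  A union bound over the (n(n+1))^k encodings
   of pairs with |U| = k >= |W| then gives less than 2/n. *)

From mathcomp Require Import all_boot all_order all_algebra.
From mathcomp Require Import boolp reals exp Rstruct sequences.
From mathcomp Require Import lra zify.
Import Order.TTheory GRing.Theory Num.Theory.
Local Open Scope ring_scope.
Set Implicit Arguments. Unset Strict Implicit.

Section CutEdges.
Variable n : nat.
Implicit Types (E F : {set {set 'I_n}}) (U W : {set 'I_n}).

Definition cut_edges E U W : {set {set 'I_n}} :=
  [set e in E | [exists u in U, exists v,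
     [&& v \notin U, v \notin W & e == [set u; v]]]].

Lemma cut_edges_sub E U W : cut_edges E U W \subset E.
Proof. by apply/subsetP => e; rewrite inE => /andP[]. Qed.

Lemma nbhd_setD_cut_edges E U W : nbhd (E :\: cut_edges E U W) U \subset W.
Proof.
apply/subsetP => v; rewrite inE => /andP[vU /existsP[u /andP[uU]]].
rewrite !inE => /andP[uv_cut uvE]; apply: contraR uv_cut => vW.
rewrite uvE /=; apply/existsP; exists u; rewrite uU /=.
by apply/existsP; exists v; rewrite vU vW eqxx.
Qed.

Lemma card_cut_edges_nbhd E F F' U :
  F' \subset F -> (#|F :&: cut_edges E U (nbhd (F :\: F') U)| <= #|F'|)%N.
Proof.
move=> sF'F; apply: subset_leq_card; apply/subsetP => e.
rewrite !inE => /andP[eF /andP[_ /existsP[u /andP[uU /existsP[v]]]]].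
case/and3P=> vU vW /eqP e_uv; apply: contraR vW => eF'.
rewrite inE vU /=; apply/existsP; exists u.
by rewrite uU -e_uv !inE eF' eF.
Qed.

Lemma expander_card_cut_edges E (eps s : RealT) U W :
  expander E eps s -> (1 <= #|U|)%N -> #|U|%:R <= 2 / 3 * n%:R :> RealT ->
  #|W|%:R < eps * #|U|%:R / (log2 n%:R) ^+ 2 ->
  s * #|U|%:R < #|cut_edges E U W|%:R.
Proof.
move=> expE U_gt0 U_small W_small; rewrite ltNge; apply/negP => few_cut.
have := expE U _ (cut_edges_sub E U W) U_gt0 U_small few_cut.
have := subset_leq_card (nbhd_setD_cut_edges E U W).
rewrite -(ler_nat RealT); lra.
Qed.

End CutEdges.

(* A map f : 'I_k -> 'I_n * option 'I_n encodes the pair (U, W) of its first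
   components and its defined second components; counting these (n(n+1))^k maps
   is the union bound over pairs with |U| = k >= |W|. *)
Section Codes.
Variables n k : nat.
Implicit Type f : {ffun 'I_k -> 'I_n * option 'I_n}.

Definition code_fst f : {set 'I_n} := [set (f i).1 | i : 'I_k].
Definition code_snd f : {set 'I_n} := [set v | [exists i, (f i).2 == Some v]].

End Codes.

Lemma exists_code n k (U W : {set 'I_n}) :
  #|U| = k -> (#|W| <= k)%N ->
  exists f : {ffun 'I_k -> 'I_n * option 'I_n}, code_fst f = U /\ code_snd f = W.
Proof.
move=> <- W_le; exists [ffun i => (enum_val i, onth (enum W) i)].
split; apply/setP => v.
- apply/imsetP/idP => [[i _ ->]|vU]; first by rewrite ffunE enum_valP.
  by exists (enum_rank_in vU v); rewrite // ffunE enum_rankK_in.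
- rewrite inE; apply/existsP/idP => [[i]|].
    by rewrite ffunE -mem_enum => /eqP vi; apply/onthP; exists i.
  rewrite -mem_enum => /onthP[i vi].
  have i_lt : (i < #|U|)%N.
    by apply: leq_trans W_le; rewrite cardE -onthTE vi.
  by exists (Ordinal i_lt); rewrite ffunE vi.
Qed.

Lemma ler_sum_term (R : numDomainType) (I : finType) (F : I -> R) (j : I) :
  (forall i, 0 <= F i) -> F j <= \sum_i F i.
Proof. by move=> F_ge0; rewrite (bigD1 j) //= lerDl sumr_ge0. Qed.

Definition bernoulli_weight (R : pzRingType) (T : finType) (E : {set T}) (p : R)
    (F : {set T}) : R :=
  p ^+ #|F| * (1 - p) ^+ (#|E| - #|F|).

Lemma bernoulli_weight_ge0 (R : numDomainType) (T : finType) (E F : {set T})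
    (p : R) :
  0 <= p <= 1 -> 0 <= bernoulli_weight E p F.
Proof. by case/andP=> p_ge0 p_le1; rewrite mulr_ge0 ?exprn_ge0 ?subr_ge0. Qed.

Lemma sum_bernoulli_weight_expX (R : comPzRingType) (T : finType) (E S : {set T})
    (p x : R) :
  S \subset E ->
  \sum_(F : {set T} | F \subset E) bernoulli_weight E p F * x ^+ #|F :&: S|
  = (1 - p + p * x) ^+ #|S|.
Proof.
move=> sSE.
pose a i := if i \in E then p * (if i \in S then x else 1) else 0.
pose b i := if i \in E then 1 - p else 1.
have -> : (1 - p + p * x) ^+ #|S| = \prod_i (a i + b i).
  rewrite -prodr_const [LHS]big_mkcond /=; apply: eq_bigr => i _.
  rewrite /a /b; case: ifP => iS; case: ifP => iE; rewrite ?add0r //.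
  - by rewrite addrC.
  - by rewrite (subsetP sSE i iS) in iE.
  - by rewrite mulr1 addrC subrK.
rewrite (@bigA_distr R 0 1 *%R +%R) /= big_mkcond; apply: eq_big => // F _.
case: ifP => sFE; last first.
  have /subsetPn[i iF iE] := negbT sFE.
  by rewrite (bigD1 i) //= iF /a (negPf iE) mul0r.
rewrite (bigID (mem F)) /=.
rewrite (eq_bigr (fun i => p * (if i \in S then x else 1))); last first.
  by move=> i iF; rewrite iF /a (subsetP sFE i iF).
rewrite [X in _ = _ * X](eq_bigr b); last by move=> i /negPf ->.
rewrite big_split /= prodr_const -!big_mkcondr /= !prodr_const /bernoulli_weight.
have -> : #|(fun i => (i \in F) && (i \in S))| = #|F :&: S|.
  by apply: eq_card => i; rewrite [RHS]inE unfold_in.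
have -> : #|(fun i => (i \notin F) && (i \in E))| = (#|E| - #|F|)%N.
  rewrite -[in RHS](setIidPr sFE) -cardsD.
  by apply: eq_card => i; rewrite [RHS]inE unfold_in.
by rewrite -!mulrA [X in _ * X]mulrC.
Qed.

Lemma expRN1_le_half (R : realType) : expR (-1) <= 1 / 2 :> R.
Proof.
have e_ge2 := expR_ge1Dx (1 : R); have e_gt0 := expR_gt0 (1 : R).
by rewrite expRN ler_pdivlMr ?ler_pdivrMl //; lra.
Qed.

Lemma sum_bernoulli_weight_expRN1 (R : realType) (T : finType) (E S : {set T})
    (p : R) :
  S \subset E -> 0 <= p <= 1 ->
  \sum_(F : {set T} | F \subset E) bernoulli_weight E p F * expR (-1) ^+ #|F :&: S|
  <= expR (- (p * #|S|%:R / 2)).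
Proof.
move=> sSE /andP[p_ge0 p_le1]; rewrite sum_bernoulli_weight_expX //.
rewrite (_ : - (p * #|S|%:R / 2) = #|S|%:R * (- (p / 2))); last by lra.
rewrite expRM_natl; apply: lerXn2r; rewrite ?nnegrE ?expR_ge0 //.
  by have := expR_ge0 (-1 : R); nra.
by have := expRN1_le_half R; have := expR_ge1Dx (- (p / 2)); nra.
Qed.

Lemma rand_subgraph_prob_le_mean n (E : {set {set 'I_n}}) (p : RealT)
    (A : {set {set 'I_n}} -> Prop) (g : {set {set 'I_n}} -> RealT) :
  0 <= p <= 1 ->
  (forall F : {set {set 'I_n}}, F \subset E -> 0 <= g F) ->
  (forall F : {set {set 'I_n}}, F \subset E -> A F -> 1 <= g F) ->
  rand_subgraph_prob E p A <=
  \sum_(F : {set {set 'I_n}} | F \subset E) bernoulli_weight E p F * g F.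
Proof.
move=> p01 g_ge0 g_ge1; apply: ler_sum => F sFE.
have w_ge0 := bernoulli_weight_ge0 E F p01.
case: asboolP => [AF|_]; last exact: mulr_ge0 (g_ge0 F sFE).
by rewrite -{1}(mulr1 (_ * _)); apply: ler_wpM2l => //; apply: g_ge1.
Qed.

Lemma ln2_gt0 (R : realType) : 0 < ln (2 : R).
Proof. by apply: ln_gt0; lra. Qed.

Lemma log2_ge1 n : (2 <= n)%N -> 1 <= log2 n%:R.
Proof.
move=> n_ge2; rewrite /log2 ler_pdivlMr ?ln2_gt0 // mul1r.
have : (2 : RealT) <= n%:R by rewrite (ler_nat RealT 2 n).
by move=> n_ge2R; rewrite ler_ln // posrE; lra.
Qed.

Lemma ln_le_2log2 n : (2 <= n)%N -> ln (n%:R : RealT) <= 2 * log2 n%:R.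
Proof.
move=> n_ge2; have ln2_pos := ln2_gt0 RealT.
have ln2_lt2 : ln (2 : RealT) < 2 by apply: ln_sublinear; lra.
have -> : ln (n%:R : RealT) = log2 n%:R * ln 2 by rewrite /log2 mulrVK // unitfE; lra.
by have := log2_ge1 n_ge2; nra.
Qed.

Lemma code_count_decay n (p s : RealT) : (2 <= n)%N ->
  10%:R ^+ 5 * (log2 n%:R) ^+ 3 <= p * s ->
  (n * n.+1)%:R * expR (- (p * s / 4)) <= 1 / n%:R ^+ 2.
Proof.
move=> n_ge2 ps_large.
have L_ge1 := log2_ge1 n_ge2; have lnn_le := ln_le_2log2 n_ge2.
set L := log2 n%:R in L_ge1 lnn_le ps_large.
have n_gt0 : (0 : RealT) < n%:R by rewrite ltr0n; lia.
have n5_le : n%:R ^+ 5 <= expR (p * s / 4).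
  rewrite -[n%:R ^+ 5]lnK ?posrE ?exprn_gt0 // lnXn // ler_expR.
  have L_le_L3 : L <= L ^+ 3 by rewrite !exprS expr0 mulr1; nra.
  have c40 : (40 : RealT) <= 10%:R ^+ 5 by rewrite -natrX ler_nat.
  have : 40 * L ^+ 3 <= p * s by apply: le_trans ps_large; apply: ler_wpM2r; nra.
  by rewrite -mulr_natr; lra.
have count_le : (n * n.+1)%:R * n%:R ^+ 2 <= n%:R ^+ 5 :> RealT.
  by rewrite -!natrX -natrM ler_nat !expnS expn0; nia.
rewrite ler_pdivlMr ?exprn_gt0 // mulrAC expRN.
by rewrite ler_pdivrMr ?expR_gt0 // mul1r; exact: le_trans count_le n5_le.
Qed.

Lemma sum_exprS_lt (R : realFieldType) (a : R) n :
  (0 < n)%N -> 0 <= a -> a <= 1 / n%:R ^+ 2 -> \sum_(k < n) a ^+ k.+1 < 2 / n%:R.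
Proof.
move=> n_gt0 a_ge0 a_le.
have n_ge1 : (1 : R) <= n%:R by rewrite ler1n.
have a_le1 : a <= 1.
  apply: le_trans a_le _; rewrite ler_pdivrMr ?exprn_gt0 //; last lra.
  by rewrite mul1r expr2; nra.
apply: (@le_lt_trans _ _ (\sum_(k < n) a)).
  by apply: ler_sum => k _; rewrite exprS ler_piMr // exprn_ile1.
rewrite sumr_const card_ord -[a *+ n]mulr_natr.
have n_gt0R : (0 : R) < n%:R by lra.
pose z : R := 1 / n%:R.
have nz : n%:R * z = 1 by rewrite /z mul1r divff // gt_eqF.
have z_gt0 : 0 < z by rewrite /z divr_gt0.
have -> : 2 / n%:R = 2 * z by rewrite /z mulrA mulr1.
have : a <= z * z by rewrite -expr2 /z expr_div_n expr1n.
nra.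
Qed.

Section FailureWeight.
Variables (n : nat) (E : {set {set 'I_n}}) (eps t : RealT).
Local Notation L := (log2 n%:R).
Local Notation code k := {ffun 'I_k -> 'I_n * option 'I_n}.

Definition small_code k (f : code k) : bool :=
  [&& #|code_fst f| == k, k%:R <= 2 / 3 * n%:R :> RealT
    & #|code_snd f|%:R < eps / 4 * k%:R / L ^+ 2].

Definition code_weight k (f : code k) (F : {set {set 'I_n}}) : RealT :=
  if small_code f then
    expR (t * k%:R) * expR (-1) ^+ #|F :&: cut_edges E (code_fst f) (code_snd f)|
  else 0.

(* Dominates the indicator of non-expansion of F (failure_weight_ge1). *)
Definition failure_weight (F : {set {set 'I_n}}) : RealT :=
  \sum_(k < n) \sum_(f : code k.+1) code_weight f F.

Lemma code_weight_ge0 k (f : code k) F : 0 <= code_weight f F.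
Proof. by rewrite /code_weight; case: ifP; rewrite ?mulr_ge0 ?exprn_ge0 ?expR_ge0. Qed.

Lemma failure_weight_ge0 F : 0 <= failure_weight F.
Proof. by do 2!apply: sumr_ge0 => ? _; apply: code_weight_ge0. Qed.

Lemma failure_weight_ge1 F :
  0 <= t -> eps <= 4 -> 1 <= L -> ~ expander F (eps / 4) t -> 1 <= failure_weight F.
Proof.
move=> t_ge0 eps_le4 L_ge1 not_exp.
have [U [F' [sF'F U_gt0 U_small F'_small N_small]]] :
    exists (U : {set 'I_n}) (F' : {set {set 'I_n}}),
      [/\ F' \subset F, (1 <= #|U|)%N, #|U|%:R <= 2 / 3 * n%:R :> RealT,
           #|F'|%:R <= t * #|U|%:R
         & #|nbhd (F :\: F') U|%:R < eps / 4 * #|U|%:R / L ^+ 2].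
  apply: contrapT => no_witness; apply: not_exp => U F' sF'F U_gt0 U_small F'_small.
  by rewrite leNgt; apply/negP => N_small; apply: no_witness; exists U, F'.
set W := nbhd (F :\: F') U in N_small.
have W_le_U : (#|W| <= #|U|)%N.
  rewrite -(ler_nat RealT); apply/ltW/(lt_le_trans N_small).
  rewrite ler_pdivrMr; last by rewrite exprn_gt0 //; lra.
  have : (0 : RealT) <= #|U|%:R by [].
  have : 1 <= L ^+ 2 by rewrite expr2; nra.
  nra.
case U_k : #|U| => [|k] in U_gt0 U_small F'_small N_small W_le_U *; first by [].
have k_lt_n : (k < n)%N by move: (max_card U); rewrite card_ord U_k.
have [f [f_U f_W]] := exists_code U_k W_le_U.
apply: le_trans (ler_sum_term (Ordinal k_lt_n) _) => /=; last first.
  by move=> i; apply: sumr_ge0 => ? _; apply: code_weight_ge0.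
apply: le_trans (ler_sum_term f _) => /=; last by move=> ?; apply: code_weight_ge0.
rewrite /code_weight /small_code f_U f_W U_k eqxx U_small N_small /=.
have cut_small := card_cut_edges_nbhd E U sF'F.
rewrite -(ler_nat RealT) -/W in cut_small.
rewrite -expRM_natl -exp.expRD.
set x := (X in expR X); have x_ge0 : 0 <= x by rewrite /x; lra.
by have := expR_ge1Dx x; lra.
Qed.

Lemma mean_code_weight_le (p s : RealT) k (f : code k.+1) :
  expander E eps s -> 0 <= eps -> 0 <= p <= 1 -> 0 < L -> t <= p * s / 4 ->
  \sum_(F : {set {set 'I_n}} | F \subset E) bernoulli_weight E p F * code_weight f F
  <= expR (- (p * s / 4)) ^+ k.+1.
Proof.
move=> expE eps_ge0 p01 L_gt0 t_le.
rewrite /code_weight; case: (boolP (small_code f)) => [|_]; last first.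
  by rewrite big1 ?exprn_ge0 ?expR_ge0 // => F _; rewrite mulr0.
case/and3P=> /eqP f_k f_small W_small.
set S := cut_edges E (code_fst f) (code_snd f).
have k_ge0 : (0 : RealT) <= k.+1%:R by [].
have S_large : s * k.+1%:R < #|S|%:R.
  rewrite -f_k; apply: expander_card_cut_edges expE _ _ _; rewrite f_k //.
  apply: lt_le_trans W_small _; rewrite ler_pdivrMr ?exprn_gt0 //.
  by rewrite divfK ?gt_eqF ?exprn_gt0 //; nra.
under eq_bigr do rewrite mulrCA.
rewrite -mulr_sumr.
have := sum_bernoulli_weight_expRN1 (cut_edges_sub E (code_fst f) (code_snd f)) p01.
move=> /(ler_wpM2l (expR_ge0 (t * k.+1%:R))) /le_trans; apply.
rewrite -exp.expRD -expRM_natl ler_expR.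
case/andP: p01 => p_ge0 _.
have : p * (s * k.+1%:R) <= p * #|S|%:R by apply: ler_wpM2l => //; apply: ltW.
have : t * k.+1%:R <= p * s / 4 * k.+1%:R by apply: ler_wpM2r.
lra.
Qed.

Lemma mean_failure_weight_le (p s : RealT) :
  expander E eps s -> 0 <= eps -> 0 <= p <= 1 -> 0 < L -> t <= p * s / 4 ->
  \sum_(F : {set {set 'I_n}} | F \subset E) bernoulli_weight E p F * failure_weight F
  <= \sum_(k < n) ((n * n.+1)%:R * expR (- (p * s / 4))) ^+ k.+1.
Proof.
move=> expE eps_ge0 p01 L_gt0 t_le; rewrite /failure_weight.
under eq_bigr do rewrite mulr_sumr.
rewrite exchange_big; apply: ler_sum => k _.
under eq_bigr do rewrite mulr_sumr.
rewrite exchange_big /=.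
apply: le_trans (_ : _ <= \sum_(f : code k.+1) expR (- (p * s / 4)) ^+ k.+1) _.
  by apply: ler_sum => f _; exact: mean_code_weight_le.
rewrite sumr_const card_ffun card_prod card_option !card_ord.
by rewrite exprMn -natrX mulr_natl.
Qed.

End FailureWeight.

Lemma degree_bounds (eps p s L : RealT) :
  0 < eps < 1 -> 0 < p -> 1 <= L -> 10%:R ^+ 5 * L ^+ 3 <= eps * p * s ->
  10%:R ^+ 5 * L ^+ 3 <= p * s /\
  0 <= eps * p * s / (10%:R ^+ 4 * L ^+ 2) <= p * s / 4.
Proof.
case/andP=> eps_gt0 eps_lt1 p_gt0 L_ge1 eps_ps_large.
have c5 : (1 : RealT) <= 10%:R ^+ 5 by rewrite -natrX ler1n.
have c4 : (4 : RealT) <= 10%:R ^+ 4 by rewrite -natrX ler_nat.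
have L3_gt0 : 0 < L ^+ 3 by rewrite exprn_gt0 //; lra.
have L2_ge1 : 1 <= L ^+ 2 by rewrite expr2; nra.
have eps_ps_gt0 : 0 < eps * p * s by apply: lt_le_trans eps_ps_large; nra.
have ps_gt0 : 0 < p * s by rewrite -mulrA pmulr_rgt0 in eps_ps_gt0.
have eps_ps_le : eps * p * s <= p * s by rewrite -mulrA; nra.
split; first lra.
apply/andP; split; first by rewrite divr_ge0 //; nra.
by rewrite ler_pdivrMr; nra.
Qed.

Theorem mainTheorem17 :
  exists (n0 : nat) (s0 : RealT),
  forall (n : nat) (s p eps : RealT) (E : {set {set 'I_n}}),
    (n0 <= n)%N -> s0 <= s ->
    0 < p -> p < 1 -> 0 < eps -> eps < 1 ->
    simple_edges E ->
    expander E eps s ->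
    10%:R ^+ 5 * (log2 n%:R) ^+ 3 <= eps * p * s ->
    rand_subgraph_prob E p
      (fun F => ~ expander F (eps / 4)
                   (eps * p * s / (10%:R ^+ 4 * (log2 n%:R) ^+ 2)))
    < 2 / n%:R.
Proof.
exists 2%N, 0 => n s p eps E n_ge2 _ p_gt0 p_lt1 eps_gt0 eps_lt1 _ expE degree_large.
have L_ge1 := log2_ge1 n_ge2.
have eps01 : 0 < eps < 1 by apply/andP.
have [ps_large /andP[t_ge0 t_le]] := degree_bounds eps01 p_gt0 L_ge1 degree_large.
have p01 : 0 <= p <= 1 by rewrite !ltW.
have eps_le4 : eps <= 4 by lra.
set t := eps * p * s / _ in t_ge0 t_le *.
apply: le_lt_trans (rand_subgraph_prob_le_mean (g := failure_weight E eps t) p01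
  (fun F _ => failure_weight_ge0 E eps t F)
  (fun F _ => failure_weight_ge1 E t_ge0 eps_le4 L_ge1)) _.
apply: le_lt_trans (mean_failure_weight_le expE (ltW eps_gt0) p01 _ t_le) _; first lra.
apply: sum_exprS_lt; first by lia.
  by rewrite mulr_ge0 ?expR_ge0.
exact: code_count_decay.
Qed.
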